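(* Let $q$ be a symmetric unimodal probability density on $\mathbb{R}$ with $h_q:=-\int_{\mathbb{R}} q(x)\log q(x)\,dx$ finite, and let $0<d_{\min}\le d_{\max}$ be constants. Let $X$ be a real random variable with probability density $p$ satisfying $$\frac{q(x)}{d_{\max}}\le p(x)\le \frac{q(x)}{d_{\min}}\quad\text{for all }x\in\mathbb{R}.$$ Then the differential entropy $h(X)=-\int p\log p$ satisfies $$h(X)\ \ge\ \frac{h_q}{d_{\max}}+\log d_{\min}-\left(\frac{1}{d_{\min}}-\frac{1}{d_{\max}}\right)\big[q(0)\log q(0)\big]^+,$$ $$h(X)\ \le\ \frac{h_q}{d_{\min}}+\log d_{\max}+\left(\frac{1}{d_{\min}}-\frac{1}{d_{\max}}\right)\big[q(0)\log q(0)\big]^+.$$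
   Context: Natural logarithms are used, and $[x]^+=\max(0,x)$. A probability density is symmetric unimodal if it satisfies $q(x)=q(-x)$ for all $x$ and is non-increasing on $[0,\infty)$. In the intended application $p(x)=q(x)/d(x)$ on $[-A/2,A/2)$ with $d_{\min}=1-\frac{A}{M}q(0)$ and $d_{\max}=1+\frac{A}{M}q(0)$ (assumed positive), so both bounds tend to $h_q$ as $M\to\infty$. *)

From HB Require Import structures.
From mathcomp Require Import all_boot all_order all_algebra.
From mathcomp Require Import all_classical all_reals all_analysis.
Set Implicit Arguments. Unset Strict Implicit. Unset Printing Implicit Defensive.
Import Order.TTheory GRing.Theory Num.Theory.
Import numFieldNormedType.Exports.
Local Open Scope classical_set_scope.
Local Open Scope ring_scope.

Definition is_density (R : realType) (f : R -> R) : Prop :=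
  measurable_fun setT f /\ (forall x, 0 <= f x) /\
  (\int[@lebesgue_measure R]_x (f x)%:E = 1)%E.

Definition symmetric_unimodal (R : realType) (f : R -> R) : Prop :=
  (forall x, f x = f (- x)) /\ (forall x y, 0 <= x -> x <= y -> f y <= f x).

(* differential entropy -\int f ln f (natural log; ln 0 = 0 in mathcomp, so
   the convention 0 ln 0 = 0 holds), as an extended real. *)
Definition diff_entropy (R : realType) (f : R -> R) : \bar R :=
  (- \int[@lebesgue_measure R]_x (f x * ln (f x))%:E)%E.

Definition has_density (R : realType) (d : measure_display) (T : measurableType d)
  (P : probability T R) (X : {RV P >-> R}) (p : R -> R) : Prop :=
  (forall x, 0 <= p x) /\ measurable_fun setT p /\
  forall A : set R, measurable A ->
    distribution P X A = (\int[@lebesgue_measure R]_(x in A) (p x)%:E)%E.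

Definition pos_part (R : realType) (x : R) : R := Num.max 0 x.

From HB Require Import structures.
From mathcomp Require Import all_boot all_order all_algebra.
From mathcomp Require Import all_classical all_reals all_analysis.
From mathcomp Require Import lra measurable_realfun.
Import Order.TTheory GRing.Theory Num.Theory.
Import numFieldNormedType.Exports.
Local Open Scope classical_set_scope.
Local Open Scope ring_scope.

(* Pointwise, ln p lies between
   ln q - ln dmax and ln q - ln dmin, while p ln q lies between q ln q / dmin
   and q ln q / dmax up to an error (1/dmin - 1/dmax) q L, where
   L = max(0, ln q(0)) bounds ln q by unimodality; the error is only incurred
   where ln q > 0.  These pointwise bounds are integrable (q ln q by hypothesis,
   p and q being densities), so p ln p is integrable too, and integrating them
   against the unit masses of p and q gives both bounds once one observes that
   max(0, ln q(0)) <= [q(0) ln q(0)]^+. *)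

Section MulSandwich.
Context {R : realFieldType}.
Implicit Types a b v u l L : R.

Lemma mul_sandwich_le {a b v u l L} : 0 <= b -> b * v <= a -> a <= b * u ->
  v <= u -> l <= L -> 0 <= L -> a * l <= v * (b * l) + (u - v) * b * L.
Proof.
move=> b0 bva abu vu lL L0.
have slack : 0 <= (u - v) * b * L by rewrite !mulr_ge0 // subr_ge0.
have [l_le0|l_gt0] := leP l 0.
  have : 0 <= (a - b * v) * - l by rewrite mulr_ge0 // ?subr_ge0 ?oppr_ge0.
  nra.
have : 0 <= (b * u - a) * l by rewrite mulr_ge0 ?subr_ge0 // ltW.
have : 0 <= (u - v) * b * (L - l) by rewrite !mulr_ge0 // subr_ge0.
nra.
Qed.

Lemma mul_sandwich_ge {a b v u l L} : 0 <= b -> b * v <= a -> a <= b * u ->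
  v <= u -> l <= L -> 0 <= L -> u * (b * l) - (u - v) * b * L <= a * l.
Proof.
move=> b0 bva abu vu lL L0.
have slack : 0 <= (u - v) * b * L by rewrite !mulr_ge0 // subr_ge0.
have [l_le0|l_gt0] := leP l 0.
  have : 0 <= (b * u - a) * - l by rewrite mulr_ge0 // ?subr_ge0 ?oppr_ge0.
  nra.
have : 0 <= (a - b * v) * l by rewrite mulr_ge0 ?subr_ge0 // ltW.
have : 0 <= (u - v) * b * (L - l) by rewrite !mulr_ge0 // subr_ge0.
nra.
Qed.

End MulSandwich.

Lemma max0_ln_le_pos_part (R : realType) (x : R) :
  Num.max 0 (ln x) <= pos_part (x * ln x).
Proof.
rewrite /pos_part ge_max le_max lexx /=; have [lnx_le0|lnx_gt0] := leP (ln x) 0.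
  by rewrite le_max lnx_le0.
have x_gt1 : 1 < x by rewrite ltNge; apply: contraTN lnx_gt0 => /ln_le0; rewrite leNgt.
rewrite le_max; apply/orP; right.
have : 0 <= (x - 1) * ln x by rewrite mulr_ge0 // ltW // subr_gt0.
nra.
Qed.

Lemma symmetric_unimodal_le0 {R : realType} {f : R -> R} :
  symmetric_unimodal f -> forall x, f x <= f 0.
Proof.
move=> [fN fdec] x; have [x_ge0|x_lt0] := leP 0 x; first exact: fdec.
by rewrite fN; apply: fdec; rewrite // oppr_ge0 ltW.
Qed.

Section IntegrableSandwich.
Context {d} {T : measurableType d} {R : realType} {mu : {measure set T -> \bar R}}.
Context {D : set T} {f g h : T -> R}.
Hypotheses (mD : measurable D) (mf : measurable_fun D f).
Hypotheses (ig : mu.-integrable D (EFin \o g)) (ih : mu.-integrable D (EFin \o h)).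
Hypothesis gfh : forall x, D x -> g x <= f x <= h x.

Lemma integrable_sandwich : mu.-integrable D (EFin \o f).
Proof.
have mg : measurable_fun D g by apply/measurable_EFinP; exact: measurable_int ig.
have ifg : mu.-integrable D (EFin \o (f \- g)).
  apply: le_integrable (integrableB mD ih ig) => //.
    by apply/measurable_EFinP; exact: measurable_funB.
  move=> x Dx; have /andP[gf fh] := gfh x Dx.
  rewrite /= lee_fin !ger0_norm ?subr_ge0 ?lerB //.
  exact: le_trans fh.
apply: eq_integrable mD _ _ _ (integrableD mD ig ifg) => x _ /=.
by rewrite -EFinD addrC subrK.
Qed.

End IntegrableSandwich.

Section LinearCombination.
Context {d} {T : measurableType d} {R : realType} {mu : {measure set T -> \bar R}}.
Context {D : set T} {f g h : T -> R} {a b c : R}.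
Hypothesis mD : measurable D.
Hypotheses (iF : mu.-integrable D (EFin \o f)) (iG : mu.-integrable D (EFin \o g)).
Hypothesis iH : mu.-integrable D (EFin \o h).

Let integrableZl_EFin (k : R) (u : T -> R) : mu.-integrable D (EFin \o u) ->
  mu.-integrable D (EFin \o (fun x => k * u x)).
Proof.
move=> iu; apply: eq_integrable mD _ _ _ (integrableZl mD k iu) => x _ /=.
by rewrite EFinM.
Qed.

Let integrableD_EFin (u w : T -> R) : mu.-integrable D (EFin \o u) ->
  mu.-integrable D (EFin \o w) -> mu.-integrable D (EFin \o (u \+ w)).
Proof.
move=> iu iw; apply: eq_integrable mD _ _ _ (integrableD mD iu iw) => x _ /=.
by rewrite EFinD.
Qed.

Lemma integrable_lincomb3 :
  mu.-integrable D (EFin \o (fun x => a * f x + b * g x + c * h x)).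
Proof.
apply: (integrableD_EFin (fun x => a * f x + b * g x)); last exact: integrableZl_EFin.
by apply: integrableD_EFin; exact: integrableZl_EFin.
Qed.

Lemma Rintegral_lincomb3 :
  \int[mu]_(x in D) (a * f x + b * g x + c * h x) =
  a * \int[mu]_(x in D) f x + b * \int[mu]_(x in D) g x + c * \int[mu]_(x in D) h x.
Proof.
have iab : mu.-integrable D (EFin \o (fun x => a * f x + b * g x)).
  by apply: integrableD_EFin; exact: integrableZl_EFin.
rewrite (RintegralD mD iab); last exact: integrableZl_EFin.
by rewrite RintegralD ?RintegralZl //; exact: integrableZl_EFin.
Qed.

End LinearCombination.

Lemma is_density_integrable {R : realType} {f : R -> R} :
  is_density f -> (@lebesgue_measure R).-integrable setT (EFin \o f).
Proof.
move=> [mf [f_ge0 int1]]; apply/integrableP; split; first exact/measurable_EFinP.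
under eq_integral => x _ do rewrite /comp abse_EFin ger0_norm//.
by rewrite int1 ltry.
Qed.

Lemma is_density_Rintegral {R : realType} {f : R -> R} :
  is_density f -> \int[@lebesgue_measure R]_x f x = 1.
Proof. by move=> [_ [_ int1]]; rewrite /Rintegral int1. Qed.

Lemma has_density_is_density {R : realType} {d} {T : measurableType d}
    {P : probability T R} {X : {RV P >-> R}} {p : R -> R} :
  has_density X p -> is_density p.
Proof.
move=> [p_ge0 [mp law]]; split=> //; split=> //.
by rewrite -law // probability_setT.
Qed.

Lemma diff_entropy_Rintegral {R : realType} {f : R -> R} :
  (@lebesgue_measure R).-integrable setT (EFin \o (fun x => f x * ln (f x))) ->
  diff_entropy f = (- \int[@lebesgue_measure R]_x (f x * ln (f x)))%:E.
Proof.
by move=> iF; rewrite /diff_entropy EFinN /Rintegral fineK // integrable_fin_num.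
Qed.

Section EntropySandwich.
Context {R : realType}.
Local Notation mu := (@lebesgue_measure R).
Context {q p : R -> R} {dmin dmax L : R}.
Hypotheses (dmin_gt0 : 0 < dmin) (dmin_le_dmax : dmin <= dmax).
Hypothesis p_ge0 : forall x, 0 <= p x.
Hypothesis p_ge : forall x, q x / dmax <= p x.
Hypothesis p_le : forall x, p x <= q x / dmin.
Hypothesis ln_q_le : forall x, 0 < q x -> ln (q x) <= L.
Hypothesis L_ge0 : 0 <= L.

Let k := dmin^-1 - dmax^-1.
Let dmax_gt0 : 0 < dmax. Proof. exact: lt_le_trans dmin_le_dmax. Qed.
Let dmin_inv_gt0 : 0 < dmin^-1. Proof. by rewrite invr_gt0. Qed.
Let dmax_inv_gt0 : 0 < dmax^-1. Proof. by rewrite invr_gt0. Qed.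
Let dmax_inv_le : dmax^-1 <= dmin^-1. Proof. by rewrite lef_pV2 ?posrE. Qed.

Let q_ge0 x : 0 <= q x.
Proof. by rewrite -(ler_pM2r dmin_inv_gt0) mul0r (le_trans (p_ge0 x)). Qed.

Let q_gt0 x : 0 < p x -> 0 < q x.
Proof. by move=> px_gt0; rewrite -(pmulr_lgt0 _ dmin_inv_gt0) (lt_le_trans px_gt0). Qed.

Let q_eq0 x : p x = 0 -> q x = 0.
Proof.
move=> px0; apply/le_anti; rewrite q_ge0 andbT.
by rewrite -(ler_pM2r dmax_inv_gt0) mul0r -px0.
Qed.

Let ln_p_le x : 0 < p x -> ln (p x) <= ln (q x) - ln dmin.
Proof.
move=> px_gt0; rewrite lerBrDr -lnM ?posrE // ler_ln ?posrE ?mulr_gt0 ?q_gt0 //.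
by rewrite -ler_pdivlMr.
Qed.

Let ln_p_ge x : 0 < p x -> ln (q x) - ln dmax <= ln (p x).
Proof.
move=> px_gt0; rewrite lerBlDr -lnM ?posrE // ler_ln ?posrE ?mulr_gt0 ?q_gt0 //.
by rewrite -ler_pdivrMr.
Qed.

Lemma xlnx_density_le x :
  p x * ln (p x) <= dmax^-1 * (q x * ln (q x)) + - ln dmin * p x + k * L * q x.
Proof.
have [px0|px_gt0] := eqVneq (p x) 0.
  by rewrite px0 q_eq0 // !(mulr0, mul0r, addr0).
have {}px_gt0 : 0 < p x by rewrite lt_def px_gt0 p_ge0.
have := mul_sandwich_le (q_ge0 x) (p_ge x) (p_le x) dmax_inv_le
  (ln_q_le _ (q_gt0 x px_gt0)) L_ge0.
have := ler_wpM2l (p_ge0 x) (ln_p_le x px_gt0).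
rewrite /k; nra.
Qed.

Lemma xlnx_density_ge x :
  dmin^-1 * (q x * ln (q x)) + - ln dmax * p x + - (k * L) * q x <= p x * ln (p x).
Proof.
have [px0|px_gt0] := eqVneq (p x) 0.
  by rewrite px0 q_eq0 // !(mulr0, mul0r, addr0).
have {}px_gt0 : 0 < p x by rewrite lt_def px_gt0 p_ge0.
have := mul_sandwich_ge (q_ge0 x) (p_ge x) (p_le x) dmax_inv_le
  (ln_q_le _ (q_gt0 x px_gt0)) L_ge0.
have := ler_wpM2l (p_ge0 x) (ln_p_ge x px_gt0).
rewrite /k; nra.
Qed.

Hypotheses (q_dens : is_density q) (p_dens : is_density p).
Hypothesis iqlnq : mu.-integrable setT (EFin \o (fun x => q x * ln (q x))).

Let iq := is_density_integrable q_dens.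
Let ip := is_density_integrable p_dens.

Lemma integrable_xlnx_density :
  mu.-integrable setT (EFin \o (fun x => p x * ln (p x))).
Proof.
have [mp _] := p_dens.
apply: (integrable_sandwich measurableT _
  (integrable_lincomb3 (a := dmin^-1) (b := - ln dmax) (c := - (k * L))
     measurableT iqlnq ip iq)
  (integrable_lincomb3 (a := dmax^-1) (b := - ln dmin) (c := k * L)
     measurableT iqlnq ip iq)).
- by apply: measurable_funM => //; apply: measurableT_comp => //; exact: measurable_ln.
- by move=> x _; rewrite xlnx_density_ge xlnx_density_le.
Qed.

Lemma diff_entropy_density_bounds :
  let hq := - \int[mu]_x (q x * ln (q x)) in
  ((hq / dmax + ln dmin - k * L)%:E <= diff_entropy p)%E /\
  (diff_entropy p <= (hq / dmin + ln dmax + k * L)%:E)%E.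
Proof.
have int_le : \int[mu]_x (p x * ln (p x)) <=
    \int[mu]_x (dmax^-1 * (q x * ln (q x)) + - ln dmin * p x + k * L * q x).
  apply: le_Rintegral => //; last by move=> x _; exact: xlnx_density_le.
    exact: integrable_xlnx_density.
  exact: integrable_lincomb3.
have int_ge :
    \int[mu]_x (dmin^-1 * (q x * ln (q x)) + - ln dmax * p x + - (k * L) * q x) <=
    \int[mu]_x (p x * ln (p x)).
  apply: le_Rintegral => //; last by move=> x _; exact: xlnx_density_ge.
    exact: integrable_lincomb3.
  exact: integrable_xlnx_density.
rewrite (Rintegral_lincomb3 measurableT iqlnq ip iq) in int_le.
rewrite (Rintegral_lincomb3 measurableT iqlnq ip iq) in int_ge.
rewrite (is_density_Rintegral q_dens) (is_density_Rintegral p_dens) in int_le int_ge.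
rewrite diff_entropy_Rintegral; last exact: integrable_xlnx_density.
rewrite /= !lee_fin.
set Iq := \int[mu]_x (q x * ln (q x)) in int_le int_ge *.
set Ip := \int[mu]_x (p x * ln (p x)) in int_le int_ge *.
split; lra.
Qed.

End EntropySandwich.

Theorem mainTheorem4 (R : realType) (q : R -> R)
  (hq_dens : is_density q) (hq_su : symmetric_unimodal q)
  (hq_fin : (@lebesgue_measure R).-integrable setT (fun x => (q x * ln (q x))%:E))
  (dmin dmax : R) (hdmin : 0 < dmin) (hdle : dmin <= dmax)
  (d : measure_display) (T : measurableType d) (P : probability T R)
  (X : {RV P >-> R}) (p : R -> R) (hX : has_density X p)
  (hbounds : forall x, q x / dmax <= p x /\ p x <= q x / dmin) :
  let hq := - \int[@lebesgue_measure R]_x (q x * ln (q x)) in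
  let c := (dmin^-1 - dmax^-1) * pos_part (q 0 * ln (q 0)) in
  ((hq / dmax + ln dmin - c)%:E <= diff_entropy p)%E /\
  (diff_entropy p <= (hq / dmin + ln dmax + c)%:E)%E.
Proof.
move=> hq c.
have hp_dens := has_density_is_density hX.
have [_ [p_ge0 _]] := hp_dens.
have p_ge x : q x / dmax <= p x by have [] := hbounds x.
have p_le x : p x <= q x / dmin by have [] := hbounds x.
have L_ge0 : 0 <= Num.max 0 (ln (q 0)) by rewrite le_max lexx.
have ln_q_le x : 0 < q x -> ln (q x) <= Num.max 0 (ln (q 0)).
  move=> qx_gt0; have qx_le := symmetric_unimodal_le0 hq_su x.
  by rewrite le_max ler_ln ?qx_le ?orbT ?posrE // (lt_le_trans qx_gt0).
have kL_le_c : (dmin^-1 - dmax^-1) * Num.max 0 (ln (q 0)) <= c.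
  rewrite ler_wpM2l ?max0_ln_le_pos_part // subr_ge0.
  by rewrite lef_pV2 ?posrE // (lt_le_trans hdmin).
have [lower upper] := diff_entropy_density_bounds hdmin hdle p_ge0 p_ge p_le ln_q_le L_ge0
  hq_dens hp_dens hq_fin.
split; [apply: le_trans lower | apply: le_trans upper _]; rewrite /hq lee_fin; lra.
Qed.
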